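(* Let $c,h,\alpha,\beta\in\mathbb{C}$ and $l,\gamma\in\mathbb{C}^*$. (a) For every $k\in\frac12\mathbb{Z}$, $\mathbf{1}\otimes v_k\notin U(\mathcal{D})(\mathbf{1}\otimes v_{k+\frac12})$ in $M(c,h,l)\otimes A(\alpha,\beta,\gamma)$. (b) The $\mathcal{D}$-module $M(c,h,l)\otimes A(\alpha,\beta,\gamma)$ is not irreducible.
   Context: The mirror-twisted Heisenberg–Virasoro algebra $\mathcal{D}$ is the complex Lie algebra with basis $\{d_m,h_r,\mathbf{c},\mathbf{l}: m\in\mathbb{Z}, r\in\frac12+\mathbb{Z}\}$ and brackets $[d_m,d_n]=(m-n)d_{m+n}+\frac{m^3-m}{12}\delta_{m+n,0}\mathbf{c}$, $[d_m,h_r]=-rh_{m+r}$, $[h_r,h_s]=r\delta_{r+s,0}\mathbf{l}$, with $\mathbf{c},\mathbf{l}$ central. $\mathcal{D}^{+}=\mathrm{span}\{d_{n},h_{r}: n\in\mathbb{N}, r\in\frac12+\mathbb{Z}_{\ge0}\}$, $\mathcal{D}^0=\mathrm{span}\{d_0,\mathbf{c},\mathbf{l}\}$. The Verma module is $M(c,h,l)=U(\mathcal{D})\otimes_{U(\mathcal{D}^0\oplus\mathcal{D}^+)}\mathbb{C}\mathbf{1}$ with $d_0\mathbf{1}=h\mathbf{1}$, $\mathbf{c}\mathbf{1}=c\mathbf{1}$, $\mathbf{l}\mathbf{1}=l\mathbf{1}$, $\mathcal{D}^+\mathbf{1}=0$. $A(\alpha,\beta,\gamma)$ is the $\mathcal{D}$-module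 with basis $\{v_k:k\in\frac12\mathbb{Z}\}$ and $d_mv_k=(\alpha+\beta m-k)v_{m+k}$, $h_rv_n=v_{n+r}$ for $n\in\mathbb{Z}$, $h_rv_s=\gamma v_{r+s}$ for $s\in\frac12+\mathbb{Z}$, $\mathbf{c},\mathbf{l}$ acting as $0$. Tensor products carry the action $x(v\otimes w)=xv\otimes w+v\otimes xw$. *)

From HB Require Import structures.
From mathcomp Require Import all_boot all_order all_algebra.
From mathcomp Require Import complex.
From mathcomp Require Import reals.
Set Implicit Arguments. Unset Strict Implicit. Unset Printing Implicit Defensive.
Import Order.TTheory GRing.Theory Num.Theory.
Local Open Scope ring_scope.

(* Basis of the mirror-twisted Heisenberg-Virasoro algebra D:
     d_m (m : int), h_{j + 1/2} (j : int), c, l.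
   A D-module is given by the action of the basis elements on a K-vector space. *)
Section DModules.
Variable K : fieldType.

Record Drep (V : lmodType K) := DRep {
  dop : int -> V -> V;
  hop : int -> V -> V;          (* hop j = h_{j+1/2} *)
  cop : V -> V;
  lop : V -> V
}.

Definition is_lin (V W : lmodType K) (f : V -> W) :=
  forall (a : K) (u v : V), f (a *: u + v) = a *: f u + f v.

Definition is_Dmodule (V : lmodType K) (r : Drep V) : Prop :=
  [/\ (forall m, is_lin (dop r m)), (forall j, is_lin (hop r j)),
      is_lin (cop r), is_lin (lop r) &
  [/\ [/\
      (forall (m n : int) v,
         dop r m (dop r n v) - dop r n (dop r m v) =
         (m - n)%:~R *: dop r (m + n) v
         + (if m + n == 0 then ((m ^+ 3 - m)%:~R / 12%:R) *: cop r v else 0)),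
      (forall (m j : int) v,
         dop r m (hop r j v) - hop r j (dop r m v) =
         - ((2 * j + 1)%:~R / 2%:R) *: hop r (m + j) v) &
      (forall (i j : int) v,
         hop r i (hop r j v) - hop r j (hop r i v) =
         (if i + j + 1 == 0 then ((2 * i + 1)%:~R / 2%:R) *: lop r v else 0))],
      (forall m v, cop r (dop r m v) = dop r m (cop r v)
                /\ lop r (dop r m v) = dop r m (lop r v)),
      (forall j v, cop r (hop r j v) = hop r j (cop r v)
                /\ lop r (hop r j v) = hop r j (lop r v)) &
      (forall v, cop r (lop r v) = lop r (cop r v))]].

Definition is_Dhom (V W : lmodType K) (r : Drep V) (s : Drep W) (f : V -> W) :=
  [/\ is_lin f,
      (forall m v, f (dop r m v) = dop s m (f v)),
      (forall j v, f (hop r j v) = hop s j (f v)),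
      (forall v, f (cop r v) = cop s (f v)) &
      (forall v, f (lop r v) = lop s (f v))].

Definition is_hw (c h l : K) (V : lmodType K) (r : Drep V) (w : V) :=
  [/\ dop r 0 w = h *: w, cop r w = c *: w, lop r w = l *: w,
      (forall m : int, 0 < m -> dop r m w = 0) &
      (forall j : int, 0 <= j -> hop r j w = 0)].

(* The Verma module M(c,h,l) = U(D) (x)_{U(D^0 + D^+)} C1, characterised by
   its defining universal property (induced module). *)
Definition is_Verma (c h l : K) (M : lmodType K) (r : Drep M) (one : M) :=
  [/\ is_Dmodule r, is_hw c h l r one &
      forall (N : lmodType K) (s : Drep N) (w : N),
        is_Dmodule s -> is_hw c h l s w ->
        exists! f : M -> N, is_Dhom r s f /\ f one = w].

(* A has basis v_k, k in 1/2 Z;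
   we index v_k by the integer n = 2k.  Since {v_k} is a basis of A,
   M (x) A = (+)_k M (x) v_k, and an element sum_k u_k (x) v_k is encoded as
   a finitely supported function f : int -> M, f n = u_{n/2}.  The action
   x (u (x) v) = x u (x) v + u (x) x v gives the operators below. *)
Section Tensor.
Variables (alpha beta gamma : K) (M : lmodType K) (r : Drep M).

Definition fsupp (f : int -> M) := exists s : seq int, forall n, n \notin s -> f n = 0.

(* d_m v_k = (alpha + beta m - k) v_{m+k} *)
Definition tD (m : int) (f : int -> M) : int -> M := fun n =>
  dop r m (f n) + (alpha + beta * m%:~R - (n - 2 * m)%:~R / 2%:R) *: f (n - 2 * m).

(* h_r v_k = v_{k+r} for k in Z, = gamma v_{k+r} for k in 1/2 + Z; r = j + 1/2 *)
Definition tH (j : int) (f : int -> M) : int -> M := fun n =>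
  hop r j (f n)
  + (if (2 %| (n - (2 * j + 1)))%Z then 1 else gamma) *: f (n - (2 * j + 1)).

(* c and l act as 0 on A *)
Definition tC (f : int -> M) : int -> M := fun n => cop r (f n).
Definition tL (f : int -> M) : int -> M := fun n => lop r (f n).

Definition tsubmod (S : (int -> M) -> Prop) :=
  [/\ (forall f, S f -> fsupp f), S (fun _ => 0) &
      (forall a f g, S f -> S g -> S (fun n => a *: f n + g n))] /\
  [/\ (forall m f, S f -> S (tD m f)),
      (forall j f, S f -> S (tH j f)) &
      (forall f, S f -> S (tC f) /\ S (tL f))].

Definition in_gen (w f : int -> M) :=
  forall S, tsubmod S -> S w -> S f.

Definition t_irreducible :=
  (exists f, fsupp f /\ exists n, f n <> 0) /\
  forall S, tsubmod S ->
    (forall f, S f -> forall n, f n = 0) \/ (forall f, fsupp f -> S f).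

End Tensor.

Definition tvec (M : lmodType K) (u : M) (n : int) : int -> M :=
  fun n' => if n' == n then u else 0.

End DModules.

From HB Require Import structures.
From mathcomp Require Import all_boot all_order all_algebra.
From mathcomp Require Import complex reals finmap.
From mathcomp.multinomials Require Import monalg.
From mathcomp Require Import ring zify.
From Stdlib Require Import FunctionalExtensionality.
Import Order.TTheory GRing.Theory Num.Theory.
Set Implicit Arguments. Unset Strict Implicit. Unset Printing Implicit Defensive.
Local Open Scope ring_scope.

(* Write x_s (s : int) for d_(s/2) if s is even and h_(s/2) if s is odd, so that D^- is spanned
   by the x_s with s < 0, and v_(n/2) for the basis of A.  As M = M(c,h,l) is free over U(D^-)
   on its highest weight vector 1, for every k there are linear forms phi_n on M with
   phi_n(1) = [n = k] and phi_n(x_s u) = - a_s(n) phi_(n+s)(u), where a_s(n) is defined by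
   x_s v_(n/2) = a_s(n) v_((n+s)/2).  The form Phi(sum_n u_n (x) v_(n/2)) = sum_n phi_n(u_n)
   then vanishes on x_s (M (x) A) for all s < 0.  Let S be the U(D^-)-module spanned by the
   1 (x) v_(n/2) with n > k.  The bracket relations and the highest weight property of 1 show
   that S is stable under all of D, and Phi kills S but not 1 (x) v_(k/2).  So S is a proper
   nonzero submodule containing 1 (x) v_((k+1)/2) but not 1 (x) v_(k/2).
   Since M is only given by its universal property, the argument is run in an explicit PBW model
   of the Verma module, the free module on partitions, and pulled back along the homomorphism
   from M. *)

Section StructureConstants.
Variables (K : numFieldType) (c l alpha beta gamma : K).

Definition evenz (p : int) : bool := (2 %| p)%Z.

(* [x_s, x_t] = str s t x_(s+t) + ctr s t. *)
Definition str (s t : int) : K :=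
  ((if evenz t then s else 0) - (if evenz s then t else 0))%:~R / 2%:R.

Definition ctr (s t : int) : K :=
  if s + t == 0 then
    (if evenz s then (((s%:~R / 2%:R) ^+ 3 - s%:~R / 2%:R) / 12%:R) * c
     else (s%:~R / 2%:R) * l)
  else 0.

(* x_s v_(t/2) = acoef s t v_((s+t)/2) in A(alpha, beta, gamma). *)
Definition acoef (s t : int) : K :=
  if evenz s then alpha + beta * (s%:~R / 2%:R) - t%:~R / 2%:R
  else if evenz t then 1 else gamma.

Lemma evenzD a b : evenz (a + b) = (evenz a == evenz b).
Proof. rewrite /evenz; case: (boolP (2 %| a)%Z); case: (boolP (2 %| b)%Z) => /= ? ?; lia. Qed.

Lemma evenzN a : evenz (- a) = evenz a.
Proof. rewrite /evenz; case: (boolP (2 %| a)%Z) => /= ?; lia. Qed.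

Lemma evenz_double m : evenz (2 * m).
Proof. rewrite /evenz; lia. Qed.

Lemma evenz_odd j : evenz (2 * j + 1) = false.
Proof. rewrite /evenz; apply/negP; lia. Qed.

Lemma str_antisym s t : str s t = - str t s.
Proof. by rewrite /str -mulNr -rmorphN opprB. Qed.

Lemma str_diag s : str s s = 0.
Proof. by rewrite /str subrr mul0r. Qed.

Lemma str_jacobi a b e :
  str a e * str (a + e) b + str b e * str a (b + e) = str a b * str (a + b) e.
Proof.
rewrite /str !evenzD.
by case: (evenz a); case: (evenz b); case: (evenz e) => /=;
  rewrite ?rmorphB ?rmorphD ?rmorph0; field.
Qed.

Lemma ctr_eq0 s t : s + t != 0 -> ctr s t = 0.
Proof. by rewrite /ctr => /negbTE ->. Qed.

Lemma ctr00 : ctr 0 0 = 0.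
Proof. by rewrite /ctr addr0 eqxx /evenz dvdz0 mul0r expr0n /= subrr !mul0r. Qed.

Lemma ctr_antisym s t : ctr s t = - ctr t s.
Proof.
rewrite /ctr [t + s]addrC; case: (boolP (s + t == 0)) => st0; last by rewrite oppr0.
have -> : t = - s by apply/eqP; rewrite -subr_eq0 opprK addrC.
by rewrite evenzN; case: (evenz s); rewrite ?rmorphN; field.
Qed.

Lemma ctr_jacobi a b e :
  str a e * ctr (a + e) b + str b e * ctr a (b + e) = str a b * ctr (a + b) e.
Proof.
rewrite /ctr.
have -> : a + e + b = a + b + e by ring.
have -> : a + (b + e) = a + b + e by ring.
case: eqP => [/eqP abe0|]; last by rewrite !mulr0 addr0.
have -> : e = - (a + b) by apply/eqP; rewrite -subr_eq0 opprK addrC.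
have -> : a + - (a + b) = - b by ring.
rewrite /str !evenzD !evenzN !evenzD.
by case: (evenz a); case: (evenz b) => /=;
  rewrite ?rmorphB ?rmorphD ?rmorphN ?rmorph0; field.
Qed.

Lemma acoef_bracket s t u :
  acoef s (u + t) * acoef t u - acoef t (u + s) * acoef s u = str s t * acoef (s + t) u.
Proof.
rewrite /acoef /str !evenzD.
by case: (evenz s); case: (evenz t); case: (evenz u) => /=;
  rewrite ?rmorphB ?rmorphD ?rmorph0; field.
Qed.

End StructureConstants.

Arguments str_antisym {K}.
Arguments str_diag {K}.
Arguments str_jacobi {K}.

Section LinearExtension.
Variables (K : comNzRingType) (X : choiceType) (V : lmodType K).

Fact lext_key : unit. Proof. by []. Qed.

(* Locked, as unifying with the unfolded sum makes rewriting diverge. *)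
Definition lext (F : X -> V) (e : {malg K[X]}) : V :=
  locked_with lext_key (\sum_(k <- msupp e) e@_k *: F k).

Lemma lextE F e : lext F e = \sum_(k <- msupp e) e@_k *: F k.
Proof. exact: unlock. Qed.

Lemma lextEw F (d : {fset X}) e :
  (msupp e `<=` d)%fset -> lext F e = \sum_(k <- d) e@_k *: F k.
Proof.
move=> le; rewrite lextE (big_fset_incl _ le) //= => x _ /mcoeff_outdom ->.
by rewrite scale0r.
Qed.

Lemma lext_is_linear F : linear (lext F).
Proof.
move=> a u v; have le_uv : (msupp (a *: u + v) `<=` msupp u `|` msupp v)%fset.
  exact: fsubset_trans (msuppD_le _ _) (fsetSU _ (msuppZ_le _ _)).
rewrite (lextEw F le_uv) (lextEw F (fsubsetUl _ (msupp v))).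
rewrite (lextEw F (fsubsetUr (msupp u) _)).
rewrite scaler_sumr -big_split /=; apply: eq_bigr => k _.
by rewrite mcoeffD mcoeffZ scalerDl scalerA.
Qed.

HB.instance Definition _ F :=
  GRing.isLinear.Build K {malg K[X]} V *:%R (lext F) (lext_is_linear F).

Lemma lextU F k : lext F << k >> = F k.
Proof. by rewrite (@lextEw F [fset k]%fset) ?msuppU_le // big_seq_fset1 mcoeffUU scale1r. Qed.

Lemma eq_lext F G e : {in msupp e, F =1 G} -> lext F e = lext G e.
Proof. by move=> FG; rewrite !lextE; apply: eq_big_seq => k /FG ->. Qed.

Lemma lextD F G e : lext (fun k => F k + G k) e = lext F e + lext G e.
Proof. by rewrite !lextE -big_split; apply: eq_bigr => k _; rewrite scalerDr. Qed.

Lemma lextZ a F e : lext (fun k => a *: F k) e = a *: lext F e.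
Proof. by rewrite !lextE scaler_sumr; apply: eq_bigr => k _; rewrite !scalerA mulrC. Qed.

Lemma lextB F G e : lext (fun k => F k - G k) e = lext F e - lext G e.
Proof.
rewrite -scaleN1r -lextZ -lextD; apply: eq_lext => k _.
by rewrite scaleN1r.
Qed.

End LinearExtension.

Section FreeModule.
Variables (K : comNzRingType) (X : choiceType).
Implicit Types (e : {malg K[X]}) (P Q : pred X).

Lemma lext_comp (Y : choiceType) (V : lmodType K) (F : X -> {malg K[Y]}) (G : Y -> V) e :
  lext G (lext F e) = lext (fun k => lext G (F k)) e.
Proof. by rewrite [lext F e]lextE linear_sum !lextE; apply: eq_bigr => k _; rewrite linearZ. Qed.

Lemma lext_id e : lext (fun k => << k >>) e = e.
Proof.
rewrite [RHS]monalgE lextE; apply: eq_bigr => k _.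
by apply/malgP => k'; rewrite mcoeffZ !mcoeffU mulr_natr.
Qed.

Lemma lextM (F : X -> K^o) a e : lext (fun k => a * F k) e = a * lext F e.
Proof. exact: lextZ. Qed.

Lemma msupp_lext (F : X -> {malg K[X]}) e k :
  k \in msupp (lext F e) -> exists2 m, m \in msupp e & k \in msupp (F m).
Proof.
rewrite -!mcoeff_neq0 lextE raddf_sum /=.
case: (boolP (has (fun m => (F m)@_k != 0) (msupp e))) => [/hasP[m me Fmk] _|].
  by exists m; rewrite // -mcoeff_neq0.
move=> /hasPn Fk0; rewrite big1_seq ?eqxx // => m /Fk0.
by rewrite negbK mcoeffZ => /eqP ->; rewrite mulr0.
Qed.

Definition supported P e := forall k, k \in msupp e -> P k.

Lemma supportedU P k : P k -> supported P << k >>.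
Proof. by move=> Pk k'; rewrite msuppU oner_eq0 inE => /eqP ->. Qed.

Lemma supportedD P e1 e2 : supported P e1 -> supported P e2 -> supported P (e1 + e2).
Proof. by move=> s1 s2 k /(fsubsetP (msuppD_le _ _)); rewrite inE => /orP[/s1|/s2]. Qed.

Lemma supportedZ P a e : supported P e -> supported P (a *: e).
Proof. by move=> se k /(fsubsetP (msuppZ_le _ _)) /se. Qed.

Lemma supported_lext Q (F : X -> {malg K[X]}) e :
  {in msupp e, forall k, supported Q (F k)} -> supported Q (lext F e).
Proof. by move=> sF k /msupp_lext [m /sF]; apply. Qed.

Lemma sub_supported P Q e : (forall k, P k -> Q k) -> supported P e -> supported Q e.
Proof. by move=> PQ se k /se /PQ. Qed.

End FreeModule.

Lemma eq_mod_rel (R : comRingType) (a a' u x y : R) :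
  a = a' -> x - y = (a - a') * u -> x = y.
Proof. by move=> -> /eqP; rewrite subrr mul0r subr_eq0 => /eqP. Qed.

Lemma eq_mod_rel2 (R : comRingType) (a a' b b' u v x y : R) :
  a = a' -> b = b' -> x - y = (a - a') * u + (b - b') * v -> x = y.
Proof. by move=> -> -> /eqP; rewrite !subrr !mul0r addr0 subr_eq0 => /eqP. Qed.

(* [rewrite !mcoeffD] and [ring] compare vectors of {malg _} up to conversion, which may
   diverge: these tactics only act on syntactic subterms. *)
Ltac mcoeff_simp := repeat match goal with
  | |- context [?m] => match m with
    | mcoeff ?k (?x + ?y) => replace m with (mcoeff k x + mcoeff k y) by (symmetry; apply: mcoeffD)
    | mcoeff ?k (- ?x) => replace m with (- mcoeff k x) by (symmetry; apply: mcoeffN)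
    | mcoeff ?k (?a *: ?x) => replace m with (a * mcoeff k x) by (symmetry; apply: mcoeffZ)
    end
  end.

Ltac ring_coords := repeat match goal with
  | |- context [?m] => match m with mcoeff _ _ => let x := fresh "x" in set x := m; clearbody x end
  end; ring.

Definition part (m : seq nat) : bool := sorted leq m && all (leq 1) m.
Definition to_part (m : seq nat) : seq nat := if part m then m else [::].

Local Notation lb b m := (all (leq b) m).

Lemma part_cons y m : part (y :: m) = [&& 0 < y, lb y m & part m]%N.
Proof.
rewrite /part /= (path_sortedE leq_trans).
by case: (0 < y)%N; case: (lb y m); case: (sorted _ m); case: (all _ m).
Qed.

Lemma part_behead y m : part (y :: m) -> part m.
Proof. by rewrite part_cons => /and3P[]. Qed.

Lemma part_lb y m : part (y :: m) -> lb y m.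
Proof. by rewrite part_cons => /and3P[]. Qed.

Lemma part_gt0 y m : part (y :: m) -> (0 < y)%N.
Proof. by rewrite part_cons => /and3P[]. Qed.

Lemma to_partE m : part m -> to_part m = m.
Proof. by rewrite /to_part => ->. Qed.

Lemma part_to_part m : part (to_part m).
Proof. by rewrite /to_part; case: ifP. Qed.

Lemma lbW a b m : (a <= b)%N -> lb b m -> lb a m.
Proof. by move=> ab; apply: sub_all => z; apply: leq_trans. Qed.

Section VermaModel.
Variables (K : numFieldType) (c h l : K).
Local Notation E := {malg K[seq nat]}.
Local Notation str := (@str K).
Local Notation ctr := (ctr c l).
Implicit Types (m k r : seq nat) (X : E).

(* The basis vector [pbw [:: y_1; ...; y_n]], 0 < y_1 <= ... <= y_n, stands for the PBW vector
   x_(-y_1) ... x_(-y_n) 1 of the Verma module; the operators below treat every other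
   sequence as [::], so the central elements act through the projection [normp]. *)
Definition pbw m : E := << m >>.

Definition prepend y X : E := lext (fun k => pbw (y :: k)) X.

(* Normal ordering, from x_(-y) x_(-y1) = x_(-y1) x_(-y) + str (-y) (-y1) x_(-y-y1). *)
Fixpoint neg_pbw y m : E :=
  match m with
  | [::] => pbw [:: y]
  | y1 :: r => if (y <= y1)%N then pbw (y :: y1 :: r)
               else prepend y1 (neg_pbw y r) + str (- y%:Z) (- y1%:Z) *: neg_pbw (y + y1)%N r
  end.

Definition neg_op y X : E := lext (fun k => neg_pbw y (to_part k)) X.

(* x_p x_(-y1) u = x_(-y1) x_p u + [x_p, x_(-y1)] u, and x_p 1 = [p = 0] h 1 for p >= 0. *)
Fixpoint nonneg_pbw m p : E :=
  match m with
  | [::] => (if p == 0%N then h else 0) *: pbw [::]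
  | y1 :: r => neg_op y1 (nonneg_pbw r p)
      + str p (- y1%:Z) *: (match p%:Z - y1%:Z with
                             | Posz n => nonneg_pbw r n | Negz n => neg_pbw n.+1 r end)
      + ctr p (- y1%:Z) *: pbw r
  end.

Definition mode_pbw s m : E :=
  match s with Posz n => nonneg_pbw m n | Negz n => neg_pbw n.+1 m end.

Definition mode_op s X : E := lext (fun k => mode_pbw s (to_part k)) X.

Definition normp X : E := lext (fun k => pbw (to_part k)) X.

HB.instance Definition _ y := GRing.isLinear.Build K E E *:%R (prepend y) (lext_is_linear _).
HB.instance Definition _ y := GRing.isLinear.Build K E E *:%R (neg_op y) (lext_is_linear _).
HB.instance Definition _ s := GRing.isLinear.Build K E E *:%R (mode_op s) (lext_is_linear _).
HB.instance Definition _ := GRing.isLinear.Build K E E *:%R normp (lext_is_linear _).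

Lemma prependD y : {morph prepend y : X Y / X + Y}. Proof. exact: linearD. Qed.
Lemma prependZ y a X : prepend y (a *: X) = a *: prepend y X. Proof. exact: linearZ. Qed.
Lemma neg_opD y : {morph neg_op y : X Y / X + Y}. Proof. exact: linearD. Qed.
Lemma neg_opZ y a X : neg_op y (a *: X) = a *: neg_op y X. Proof. exact: linearZ. Qed.
Lemma mode_opD s : {morph mode_op s : X Y / X + Y}. Proof. exact: linearD. Qed.
Lemma mode_opZ s a X : mode_op s (a *: X) = a *: mode_op s X. Proof. exact: linearZ. Qed.
Lemma mode_op0 s : mode_op s 0 = 0. Proof. exact: linear0. Qed.
Lemma normp0 : normp 0 = 0. Proof. exact: linear0. Qed.

Lemma mode_pbw_cons (p : nat) y1 r : mode_pbw p (y1 :: r) =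
  neg_op y1 (mode_pbw p r) + str p (- y1%:Z) *: mode_pbw (p%:Z - y1%:Z) r
  + ctr p (- y1%:Z) *: pbw r.
Proof. by []. Qed.

Lemma mode_pbw_negz n m : mode_pbw (Negz n) m = neg_pbw n.+1 m.
Proof. by []. Qed.

Lemma mode_pbw_nil (p : nat) : mode_pbw p [::] = (if p == 0%N then h else 0) *: pbw [::].
Proof. by []. Qed.

Lemma mode_op_negz n X : mode_op (Negz n) X = neg_op n.+1 X.
Proof. by []. Qed.

Lemma neg_pbw_le y m : lb y m -> neg_pbw y m = pbw (y :: m).
Proof. by case: m => //= y1 m /andP[->]. Qed.

Lemma neg_pbw_gt y y1 m : (y1 < y)%N ->
  neg_pbw y (y1 :: m) = prepend y1 (neg_pbw y m) + str (- y%:Z) (- y1%:Z) *: neg_pbw (y + y1)%N m.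
Proof. by move=> lt; rewrite [LHS]/= leqNgt lt. Qed.

Lemma neg_pbw_lb m y b : part m -> (0 < y)%N -> (b <= y)%N -> lb b m ->
  supported (fun k => part k && lb b k) (neg_pbw y m).
Proof.
elim: m y b => [|y1 r IH] y b pm y0 by_ lbm /=.
  by apply: supportedU; rewrite part_cons y0 /= by_.
have pr := part_behead pm; have lbr := part_lb pm; have y10 := part_gt0 pm.
case: ifP => yy1.
  apply: supportedU; rewrite part_cons y0 /= yy1 /= by_ /=.
  by move: lbm => /= /andP[-> ->]; rewrite (lbW yy1 lbr) pm.
move: lbm => /= /andP[by1 lbr'].
apply: supportedD; last first.
  apply/supportedZ/IH => //; first by rewrite addn_gt0 y0.
  exact: leq_trans by_ (leq_addr _ _).
apply: supported_lext => k kX; apply: supportedU.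
have y1y : (y1 <= y)%N by rewrite ltnW // ltnNge yy1.
have /andP[pk lbk] := IH y y1 pr y0 y1y lbr k kX.
have /andP[_ lbk'] := IH y b pr y0 by_ lbr' k kX.
by rewrite part_cons y10 lbk pk /= by1 lbk'.
Qed.

Lemma neg_pbw_part m y : part m -> (0 < y)%N -> supported part (neg_pbw y m).
Proof.
move=> pm y0; have lb0 : lb 0 m by apply/allP.
by apply: sub_supported (neg_pbw_lb pm y0 (leq0n y) lb0) => k /andP[].
Qed.

Lemma neg_pbw_prepend_part y1 r y : part (y1 :: r) -> (y1 <= y)%N ->
  supported (fun k => part (y1 :: k)) (neg_pbw y r).
Proof.
move=> pm y1y; have y0 := leq_trans (part_gt0 pm) y1y.
apply: sub_supported (neg_pbw_lb (part_behead pm) y0 y1y (part_lb pm)).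
by move=> k /andP[pk lbk]; rewrite part_cons (part_gt0 pm) lbk pk.
Qed.

Lemma neg_op_pbw y m : part m -> neg_op y (pbw m) = neg_pbw y m.
Proof. by move=> pm; rewrite /neg_op lextU to_partE. Qed.

Lemma neg_op_part y X : (0 < y)%N -> supported part (neg_op y X).
Proof. by move=> y0; apply: supported_lext => k _; apply: neg_pbw_part (part_to_part k) y0. Qed.

Lemma mode_pbw_part s m : part m -> supported part (mode_pbw s m).
Proof.
case: s => [p|n] pm /=; last exact: neg_pbw_part.
elim: m p pm => [|y1 r IH] p pm /=; first exact/supportedZ/supportedU.
apply: supportedD; [apply: supportedD|].
- exact: neg_op_part (part_gt0 pm).
- apply: supportedZ; case: (p%:Z - y1%:Z) => n; first exact: IH (part_behead pm).
  exact: neg_pbw_part (part_behead pm) _.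
- exact/supportedZ/supportedU/(part_behead pm).
Qed.

Arguments neg_pbw : simpl never.
Arguments mode_pbw : simpl never.

Lemma neg_op_prepend_gt y y1 X : (y1 < y)%N -> supported (fun k => part (y1 :: k)) X ->
  neg_op y (prepend y1 X) = prepend y1 (neg_op y X) + str (- y%:Z) (- y1%:Z) *: neg_op (y + y1)%N X.
Proof.
move=> lt sX; rewrite /neg_op /prepend lext_comp [in RHS]lext_comp -lextZ -lextD.
apply: eq_lext => k /sX pk.
by rewrite lextU (to_partE pk) (neg_pbw_gt _ lt) to_partE ?(part_behead pk).
Qed.

Lemma neg_op_prepend_le y X : supported (fun k => part k && lb y k) X -> neg_op y X = prepend y X.
Proof. by move=> sX; apply: eq_lext => k /sX /andP[pk lbk]; rewrite to_partE // neg_pbw_le. Qed.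

Definition neg_neg_rel m := forall y y', (0 < y)%N -> (0 < y')%N ->
  neg_op y (neg_pbw y' m) - neg_op y' (neg_pbw y m)
  = str (- y%:Z) (- y'%:Z) *: neg_pbw (y + y')%N m.

Lemma neg_neg_rel_wlog m :
  (forall y y', (0 < y')%N -> (y' < y)%N ->
     neg_op y (neg_pbw y' m) - neg_op y' (neg_pbw y m)
     = str (- y%:Z) (- y'%:Z) *: neg_pbw (y + y')%N m) ->
  neg_neg_rel m.
Proof.
move=> ordered y y' y0 y'0; case: (ltngtP y' y) => [lt|gt|->]; first exact: ordered.
  by rewrite -opprB ordered // str_antisym scaleNr opprK addnC.
by rewrite subrr str_diag scale0r.
Qed.

Lemma neg_pbw_comm_lb m y y' : part m -> (0 < y')%N -> (y' < y)%N -> lb y' m ->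
  neg_op y (neg_pbw y' m) - neg_op y' (neg_pbw y m)
  = str (- y%:Z) (- y'%:Z) *: neg_pbw (y + y')%N m.
Proof.
move=> pm y'0 lt lbm; have y0 := ltn_trans y'0 lt.
rewrite (neg_pbw_le lbm) neg_op_pbw; last by rewrite part_cons y'0 lbm pm.
rewrite neg_pbw_gt // (@neg_op_prepend_le y' (neg_pbw y m)); first by rewrite addrC addKr.
exact: neg_pbw_lb (ltnW lt) lbm.
Qed.

Lemma neg_pbw_comm_step y1 r y y' : part (y1 :: r) -> neg_neg_rel r -> (y1 < y')%N -> (y' < y)%N ->
  neg_op y (neg_pbw y' (y1 :: r)) - neg_op y' (neg_pbw y (y1 :: r))
  = str (- y%:Z) (- y'%:Z) *: neg_pbw (y + y')%N (y1 :: r).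
Proof.
move=> pm IH lt1 lt; have lt2 := ltn_trans lt1 lt.
have y'0 : (0 < y')%N := leq_ltn_trans (leq0n y1) lt1.
have y0 := ltn_trans y'0 lt.
rewrite (neg_pbw_gt r lt1) (neg_pbw_gt r lt2) (neg_pbw_gt r (ltn_addr y' lt2)) !neg_opD !neg_opZ.
rewrite (neg_op_prepend_gt lt2 (neg_pbw_prepend_part pm (ltnW lt1))).
rewrite (neg_op_prepend_gt lt1 (neg_pbw_prepend_part pm (ltnW lt2))).
have /eqP := IH y y' y0 y'0; rewrite subr_eq => /eqP ->.
have /eqP := IH (y + y1)%N y' (ltn_addr _ y0) y'0; rewrite addnAC subr_eq => /eqP ->.
have /eqP := IH y (y' + y1)%N y0 (ltn_addr _ y'0); rewrite addnA subr_eq => /eqP ->.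
have J : str (- y%:Z) (- y1%:Z) * str (- (y + y1)%N%:Z) (- y'%:Z)
       + str (- y'%:Z) (- y1%:Z) * str (- y%:Z) (- (y' + y1)%N%:Z)
       = str (- y%:Z) (- y'%:Z) * str (- (y + y')%N%:Z) (- y1%:Z).
  by rewrite !PoszD !opprD; apply: str_jacobi.
rewrite !prependD !prependZ; apply/malgP => k; mcoeff_simp.
by apply: (eq_mod_rel (u := (neg_pbw (y + y' + y1)%N r)@_k) J); ring_coords.
Qed.

Lemma part_neg_neg_rel m : part m -> neg_neg_rel m.
Proof.
elim: m => [|y1 r IH] pm; apply: neg_neg_rel_wlog => y y' y'0 lt.
  exact: neg_pbw_comm_lb.
case: (leqP y' y1) => y'y1.
  by apply: neg_pbw_comm_lb => //; rewrite /= y'y1 (lbW y'y1 (part_lb pm)).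
exact: neg_pbw_comm_step (IH (part_behead pm)) y'y1 lt.
Qed.

Lemma neg_op_comm y y' X : (0 < y)%N -> (0 < y')%N ->
  neg_op y (neg_op y' X) - neg_op y' (neg_op y X) = str (- y%:Z) (- y'%:Z) *: neg_op (y + y')%N X.
Proof.
move=> y0 y'0; rewrite {1 3}/neg_op !lext_comp -lextB /neg_op -lextZ.
by apply: eq_lext => k _; apply: part_neg_neg_rel (part_to_part k) y y' y0 y'0.
Qed.

Lemma mode_op_pbw s m : part m -> mode_op s (pbw m) = mode_pbw s m.
Proof. by move=> pm; rewrite /mode_op lextU to_partE. Qed.

Lemma mode_op_prepend (p : nat) y1 X : supported (fun k => part (y1 :: k)) X ->
  mode_op p (prepend y1 X) = neg_op y1 (mode_op p X) + str p (- y1%:Z) *: mode_op (p%:Z - y1%:Z) X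
    + ctr p (- y1%:Z) *: X.
Proof.
move=> sX; rewrite -{4}[X]lext_id -/pbw.
rewrite {1}/mode_op /prepend lext_comp {1}/neg_op {1}/mode_op lext_comp /mode_op.
rewrite -!lextZ -!lextD; apply: eq_lext => k /sX pk.
by rewrite lextU !to_partE //; apply: part_behead pk.
Qed.

Lemma NegzD n y : Negz n - y%:Z = Negz (n + y).
Proof. by rewrite !NegzE -addSn PoszD opprD. Qed.

Lemma neg_op_mode_pbw s y1 r : part (y1 :: r) ->
  neg_op y1 (mode_pbw s r) = mode_pbw s (y1 :: r) - str s (- y1%:Z) *: mode_pbw (s - y1%:Z) r
    - ctr s (- y1%:Z) *: pbw r.
Proof.
move=> pm; case: s => n.
  by rewrite [mode_pbw _ (y1 :: r)]mode_pbw_cons addrAC !addrK.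
have pr := part_behead pm; have y10 := part_gt0 pm.
rewrite NegzD ctr_eq0; last by rewrite NegzE; lia.
rewrite !mode_pbw_negz scale0r subr0.
have /eqP := part_neg_neg_rel pr (ltn0Sn n) y10.
rewrite (neg_pbw_le (part_lb pm)) neg_op_pbw // subr_eq => /eqP ->.
by rewrite NegzE addSn [_ + neg_op _ _]addrC addrK.
Qed.

Lemma negz_neg_rel n y r : part r -> (0 < y)%N ->
  mode_op (Negz n) (neg_pbw y r) - neg_op y (mode_pbw (Negz n) r)
  = str (Negz n) (- y%:Z) *: mode_pbw (Negz n - y%:Z) r + ctr (Negz n) (- y%:Z) *: pbw r.
Proof.
move=> pr y0; rewrite ctr_eq0; last by rewrite NegzE; lia.
by rewrite NegzD /= scale0r addr0 -/(neg_op n.+1 _) (part_neg_neg_rel pr (ltn0Sn n) y0) NegzE addSn.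
Qed.

Definition mode_neg_rel m := forall (s : int) y, (0 < y)%N ->
  mode_op s (neg_pbw y m) - neg_op y (mode_pbw s m)
  = str s (- y%:Z) *: mode_pbw (s - y%:Z) m + ctr s (- y%:Z) *: pbw m.

Lemma nonneg_neg_lb m (p : nat) y : part m -> (0 < y)%N -> lb y m ->
  mode_op p (neg_pbw y m) - neg_op y (mode_pbw p m)
  = str p (- y%:Z) *: mode_pbw (p%:Z - y%:Z) m + ctr p (- y%:Z) *: pbw m.
Proof.
move=> pm y0 lbm; rewrite (neg_pbw_le lbm) mode_op_pbw; last by rewrite part_cons y0 lbm pm.
by rewrite mode_pbw_cons; apply/malgP => k; mcoeff_simp; ring_coords.
Qed.

Lemma nonneg_neg_step y1 r (p : nat) y : part (y1 :: r) -> mode_neg_rel r -> (y1 < y)%N ->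
  mode_op p (neg_pbw y (y1 :: r)) - neg_op y (mode_pbw p (y1 :: r))
  = str p (- y%:Z) *: mode_pbw (p%:Z - y%:Z) (y1 :: r) + ctr p (- y%:Z) *: pbw (y1 :: r).
Proof.
move=> pm IH lt; have y10 := part_gt0 pm.
have y0 : (0 < y)%N := leq_ltn_trans (leq0n y1) lt.
have /eqP := IH p y y0; rewrite subr_eq => /eqP IHp.
have /eqP := IH (p%:Z - y1%:Z) y y0; rewrite subr_eq => /eqP IHpy1.
have /eqP := IH p (y + y1)%N (ltn_addr _ y0); rewrite subr_eq => /eqP IHpyy1.
have /eqP := neg_op_comm (mode_pbw p r) y10 y0; rewrite subr_eq => /eqP comm.
have pr := part_behead pm.
have M1 : neg_op y1 (pbw r) = pbw (y1 :: r) by rewrite neg_op_pbw // neg_pbw_le // part_lb.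
have M2 : neg_op y (pbw r) = neg_pbw y r by rewrite neg_op_pbw.
rewrite (neg_pbw_gt r lt) mode_opD mode_opZ (mode_op_prepend p (neg_pbw_prepend_part pm (ltnW lt))).
rewrite IHp IHpyy1 IHpy1 [mode_pbw p (y1 :: r)]mode_pbw_cons.
rewrite !neg_opD !neg_opZ comm (neg_op_mode_pbw (p%:Z - y%:Z) pm) M1 M2.
have -> : p%:Z - y1%:Z - y%:Z = p%:Z - y%:Z - y1%:Z by ring.
have -> : p%:Z - (y + y1)%N%:Z = p%:Z - y%:Z - y1%:Z by rewrite PoszD opprD addrA.
have -> : - (y + y1)%N%:Z = - y%:Z - y1%:Z by rewrite PoszD opprD.
rewrite addnC (str_antisym (- y1%:Z)).
apply/malgP => k; mcoeff_simp.
apply: (eq_mod_rel2 (u := (mode_pbw (p%:Z - y%:Z - y1%:Z) r)@_k) (v := (pbw r)@_k)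
  (str_jacobi p (- y%:Z) (- y1%:Z)) (ctr_jacobi c l p (- y%:Z) (- y1%:Z))).
ring_coords.
Qed.

Lemma part_mode_neg_rel m : part m -> mode_neg_rel m.
Proof.
elim: m => [|y1 r IH] pm [p|n] y y0.
- exact: nonneg_neg_lb.
- exact: negz_neg_rel.
- case: (leqP y y1) => yy1.
    by apply: nonneg_neg_lb => //; rewrite /= yy1 (lbW yy1 (part_lb pm)).
  exact: nonneg_neg_step (IH (part_behead pm)) yy1.
- exact: negz_neg_rel.
Qed.

Lemma mode_op_neg_op s y X : (0 < y)%N ->
  mode_op s (neg_op y X) - neg_op y (mode_op s X)
  = str s (- y%:Z) *: mode_op (s - y%:Z) X + ctr s (- y%:Z) *: normp X.
Proof.
move=> y0; rewrite /neg_op /mode_op /normp !lext_comp -lextB -!lextZ -lextD.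
by apply: eq_lext => k _; apply: part_mode_neg_rel (part_to_part k) s y y0.
Qed.

Lemma normp_id X : supported part X -> normp X = X.
Proof. by move=> sX; rewrite -[RHS]lext_id; apply: eq_lext => k /sX /to_partE ->. Qed.

Lemma normp_mode_op s X : normp (mode_op s X) = mode_op s X.
Proof. by apply/normp_id/supported_lext => k _; apply: mode_pbw_part (part_to_part k). Qed.

Lemma mode_op_normp s X : mode_op s (normp X) = mode_op s X.
Proof.
rewrite /normp /mode_op lext_comp; apply: eq_lext => k _.
by rewrite lextU to_partE // part_to_part.
Qed.

Lemma normp_normp X : normp (normp X) = normp X.
Proof. by apply/normp_id/supported_lext => k _; apply/supportedU/part_to_part. Qed.

Lemma normp_pbw m : part m -> normp (pbw m) = pbw m.
Proof. by move=> pm; rewrite /normp lextU to_partE. Qed.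

Definition nonneg_rel m := forall p q : nat,
  mode_op p (mode_pbw q m) - mode_op q (mode_pbw p m)
  = str p q *: mode_pbw (p + q)%N m + ctr p q *: pbw m.

Lemma nonneg_rel_int r : part r -> nonneg_rel r -> forall (p : nat) (s : int),
  mode_op p (mode_pbw s r) - mode_op s (mode_pbw p r)
  = str p s *: mode_pbw (p%:Z + s) r + ctr p s *: pbw r.
Proof.
move=> pr IH p [n|n]; first by rewrite IH PoszD.
by rewrite mode_pbw_negz mode_op_negz (part_mode_neg_rel pr p (ltn0Sn n)) NegzE.
Qed.

Lemma part_nonneg_rel m : part m -> nonneg_rel m.
Proof.
elim: m => [|y1 r IH] pm p q.
  have p_nil : part [::] by [].
  rewrite !mode_pbw_nil !mode_opZ !(mode_op_pbw _ p_nil) !mode_pbw_nil.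
  apply/malgP => k; mcoeff_simp.
  case: (posnP (p + q)%N) => [pq0|pq_gt0].
    have /andP[/eqP -> /eqP ->] : (p == 0%N) && (q == 0%N) by rewrite -addn_eq0 pq0.
    by rewrite str_diag ctr00; ring_coords.
  rewrite ctr_eq0; last by rewrite -PoszD; lia.
  ring_coords.
have pr := part_behead pm; have y10 := part_gt0 pm.
have G := nonneg_rel_int pr (IH pr).
have expand s Y : mode_op s (neg_op y1 Y)
    = str s (- y1%:Z) *: mode_op (s - y1%:Z) Y + ctr s (- y1%:Z) *: normp Y
      + neg_op y1 (mode_op s Y).
  by apply/eqP; rewrite -subr_eq; apply/eqP; apply: mode_op_neg_op.
rewrite !mode_pbw_cons !mode_opD !mode_opZ !expand !normp_id; try exact: mode_pbw_part.
rewrite !mode_op_pbw //.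
have /eqP := G q (p%:Z - y1%:Z); rewrite subr_eq => /eqP ->.
have /eqP := G p (q%:Z - y1%:Z); rewrite subr_eq => /eqP ->.
have /eqP := IH pr p q; rewrite subr_eq => /eqP ->.
have M1 : neg_op y1 (pbw r) = pbw (y1 :: r) by rewrite neg_op_pbw // neg_pbw_le // part_lb.
rewrite !neg_opD !neg_opZ M1.
have -> : q%:Z + (p%:Z - y1%:Z) = p%:Z + q%:Z - y1%:Z by ring.
have -> : p%:Z + (q%:Z - y1%:Z) = p%:Z + q%:Z - y1%:Z by ring.
rewrite PoszD (str_antisym q (p%:Z - y1%:Z)) (ctr_antisym c l q (p%:Z - y1%:Z)).
apply/malgP => k; mcoeff_simp.
apply: (eq_mod_rel2 (u := (mode_pbw (p%:Z + q%:Z - y1%:Z) r)@_k) (v := (pbw r)@_k)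
  (str_jacobi p q (- y1%:Z)) (ctr_jacobi c l p q (- y1%:Z))).
ring_coords.
Qed.

Lemma mode_op_comm s t X :
  mode_op s (mode_op t X) - mode_op t (mode_op s X)
  = str s t *: mode_op (s + t) X + ctr s t *: normp X.
Proof.
have nonneg_neg (p : nat) n : mode_op p (mode_op (Negz n) X) - mode_op (Negz n) (mode_op p X)
    = str p (Negz n) *: mode_op (p%:Z + Negz n) X + ctr p (Negz n) *: normp X.
  by rewrite !mode_op_negz mode_op_neg_op // NegzE.
case: s => [p|n]; case: t => [q|m].
- rewrite -PoszD /mode_op /normp !lext_comp -lextB -!lextZ -lextD; apply: eq_lext => k _.
  exact: part_nonneg_rel (part_to_part k) p q.
- exact: nonneg_neg.
- rewrite -opprB nonneg_neg (str_antisym (Negz n)) (ctr_antisym c l (Negz n)) [Negz n + _]addrC.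
  by apply/malgP => k; mcoeff_simp; ring_coords.
- rewrite !mode_op_negz neg_op_comm // ctr_eq0; last by rewrite !NegzE; lia.
  by rewrite scale0r addr0 !NegzE addSn addnS.
Qed.

Lemma mode_op_vacuum s : 0 < s -> mode_op s (pbw [::]) = 0.
Proof.
case: s => // p; rewrite ltz_nat => p_gt0.
by rewrite mode_op_pbw // mode_pbw_nil eqn0Ngt p_gt0 scale0r.
Qed.

Definition verma_rep : Drep E :=
  @DRep K E (fun n => mode_op (2 * n)) (fun j => mode_op (2 * j + 1))
    (fun v => c *: normp v) (fun v => l *: normp v).

Lemma verma_is_Dmodule : is_Dmodule verma_rep.
Proof.
split.
- by move=> m a u v /=; rewrite linearP.
- by move=> j a u v /=; rewrite linearP.
- by move=> a u v /=; rewrite linearP scalerDr !scalerA mulrC.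
- by move=> a u v /=; rewrite linearP scalerDr !scalerA mulrC.
split; [split| | |].
- move=> m n v /=; rewrite mode_op_comm -mulrDr.
  have -> : str (2 * m) (2 * n) = (m - n)%:~R.
    by rewrite /str !evenz_double -mulrBr rmorphM /=; field.
  have -> : ctr (2 * m) (2 * n) *: normp v
      = (if m + n == 0 then ((m ^+ 3 - m)%:~R / 12%:R) *: (c *: normp v) else 0).
    rewrite /ctr -mulrDr.
    have -> : (2 * (m + n) == 0) = (m + n == 0).
      by apply/idP/idP => /eqP mn0; apply/eqP; lia.
    case: ifP => _; last by rewrite scale0r.
    rewrite evenz_double scalerA; congr (_ *: _).
    by rewrite rmorphM /= rmorphB rmorphXn /=; field.
  by [].
- move=> m j v /=; rewrite mode_op_comm ctr_eq0; last by apply/eqP; lia.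
  rewrite scale0r addr0 /str evenz_double evenz_odd.
  have -> : 2 * m + (2 * j + 1) = 2 * (m + j) + 1 by ring.
  by congr (_ *: _); rewrite sub0r rmorphN /=; field.
- move=> i j v /=; rewrite mode_op_comm /str !evenz_odd subrr mul0r scale0r add0r /ctr.
  have -> : (2 * i + 1 + (2 * j + 1) == 0) = (i + j + 1 == 0).
    by apply/idP/idP => /eqP ij0; apply/eqP; lia.
  by case: ifP => _; rewrite ?scale0r // evenz_odd scalerA.
- by move=> m v /=; split; rewrite normp_mode_op mode_opZ mode_op_normp.
- by move=> j v /=; split; rewrite normp_mode_op mode_opZ mode_op_normp.
- by move=> v /=; rewrite !linearZ /= !normp_normp !scalerA mulrC.
Qed.

Lemma verma_hw : is_hw c h l verma_rep (pbw [::]).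
Proof.
split => /=.
- by rewrite mulr0 mode_op_pbw.
- by rewrite normp_pbw.
- by rewrite normp_pbw.
- by move=> m m_gt0; apply: mode_op_vacuum; lia.
- by move=> j j_ge0; apply: mode_op_vacuum; lia.
Qed.

End VermaModel.

Lemma sum_indep (R : zmodType) (F : int -> R) (L1 L2 : seq int) :
  uniq L1 -> uniq L2 -> (forall n, n \notin L1 -> F n = 0) ->
  (forall n, n \notin L2 -> F n = 0) -> \sum_(n <- L1) F n = \sum_(n <- L2) F n.
Proof.
move=> u1 u2 h1 h2.
have -> : \sum_(n <- L1) F n = \sum_(n <- L1 | n \in L2) F n.
  by rewrite [RHS]big_mkcond; apply: eq_bigr => n _; case: ifP => // /negbT /h2 ->.
have -> : \sum_(n <- L2) F n = \sum_(n <- L2 | n \in L1) F n.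
  by rewrite [RHS]big_mkcond; apply: eq_bigr => n _; case: ifP => // /negbT /h1 ->.
rewrite -[LHS]big_filter -[RHS]big_filter; apply: perm_big.
by apply: uniq_perm; rewrite ?filter_uniq // => n; rewrite !mem_filter andbC.
Qed.

Lemma sum_shift (R : zmodType) (g : int -> R) (s : int) (L Lg : seq int) :
  uniq L -> (forall n, n \notin Lg -> g n = 0) ->
  {subset Lg <= L} -> {subset [seq n + s | n <- Lg] <= L} ->
  \sum_(n <- L) g (n - s) = \sum_(n <- L) g n.
Proof.
move=> uL gLg LgL sLgL; set U := undup Lg.
have gU n : n \notin U -> g n = 0 by rewrite mem_undup; apply: gLg.
have uU : uniq [seq n + s | n <- U].
  by rewrite map_inj_uniq ?undup_uniq // => a b /addIr.
have zL n : n \notin L -> g (n - s) = 0.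
  move=> nL; apply: gU; rewrite mem_undup; apply: contra nL => nsLg.
  by apply: sLgL; apply/mapP; exists (n - s); rewrite ?subrK.
have zU n : n \notin [seq n + s | n <- U] -> g (n - s) = 0.
  move=> nU; apply: gU; apply: contra nU => nsU.
  by apply/mapP; exists (n - s); rewrite ?subrK.
rewrite (sum_indep uL uU zL zU) big_map; under eq_bigr do rewrite addrK.
apply: sum_indep; rewrite ?undup_uniq // => n nL.
by apply: gLg; apply: contra nL; apply: LgL.
Qed.

Section LinearMaps.
Variables (K : fieldType) (M N : lmodType K) (f : M -> N).
Hypothesis f_lin : is_lin f.

Lemma is_lin0 : f 0 = 0.
Proof. by have := f_lin (-1) 0 0; rewrite scaleN1r oppr0 addr0 => ->; rewrite scaleN1r addNr. Qed.

Lemma is_linD u v : f (u + v) = f u + f v.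
Proof. by have := f_lin 1 u v; rewrite !scale1r. Qed.

Lemma is_linZ a u : f (a *: u) = a *: f u.
Proof. by have := f_lin a u 0; rewrite !addr0 is_lin0 addr0. Qed.

End LinearMaps.

Lemma fsupp_shift (K : fieldType) (M : lmodType K) (g : M -> M) (c : int -> K) (s : int)
    (f : int -> M) :
  g 0 = 0 -> fsupp f -> fsupp (fun n => g (f n) + c n *: f (n - s)).
Proof.
move=> g0 [L fL]; exists (L ++ [seq n + s | n <- L]) => n; rewrite mem_cat negb_or.
move=> /andP[nL nsL]; rewrite fL // g0 add0r fL ?scaler0 //.
by apply: contra nsL => nsL; apply/mapP; exists (n - s); rewrite ?subrK.
Qed.

Section TensorArgument.
Variables (K : numFieldType) (c h l alpha beta gamma : K).
Local Notation E := {malg K[seq nat]}.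
Local Notation acoef := (acoef alpha beta gamma).
Local Notation str := (@str K).
Local Notation ctr := (ctr c l).
Local Notation mode_op := (@mode_op K c h l).
Local Notation pbw := (@pbw K).
Local Notation neg_pbw := (@neg_pbw K).
Local Notation vacuum := (pbw [::]).
Implicit Types (m r : seq nat) (f g : int -> E).

(* The action of x_s on M (x) A, with f n standing for the component along v_(n/2). *)
Definition tmode s f : int -> E := fun n => mode_op s (f n) + acoef s (n - s) *: f (n - s).

Lemma tD_tmode (m : int) f : tD alpha beta (verma_rep c h l) m f = tmode (2 * m) f.
Proof.
have acoef_even n : acoef (2 * m) n = alpha + beta * m%:~R - n%:~R / 2%:R.
  by rewrite /acoef evenz_double rmorphM /=; field.
by apply: functional_extensionality => n; rewrite /tmode acoef_even.
Qed.

Lemma tH_tmode j f : tH gamma (verma_rep c h l) j f = tmode (2 * j + 1) f.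
Proof.
by apply: functional_extensionality => n; rewrite /tmode /acoef evenz_odd.
Qed.

Lemma tmode_comm s t f n :
  tmode s (tmode t f) n - tmode t (tmode s f) n
  = str s t *: tmode (s + t) f n + ctr s t *: normp (f n).
Proof.
rewrite /tmode !mode_opD !mode_opZ.
have /eqP := mode_op_comm c h l s t (f n); rewrite subr_eq => /eqP ->.
have -> : n - t - s = n - s - t by ring.
have -> : n - (s + t) = n - s - t by ring.
have e1 : n - s - t + t = n - s by ring.
have e2 : n - s - t + s = n - t by ring.
have := acoef_bracket alpha beta gamma s t (n - s - t); rewrite e1 e2 => A.
apply/malgP => k; mcoeff_simp.
by apply: (eq_mod_rel (u := (f (n - s - t))@_k) A); ring_coords.
Qed.

Variable k : int.

Inductive neg_span : (int -> E) -> Prop :=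
  | neg_span_vec n : k < n -> neg_span (tvec vacuum n)
  | neg_span0 : neg_span (fun _ => 0)
  | neg_spanZD a f g : neg_span f -> neg_span g -> neg_span (fun n => a *: f n + g n)
  | neg_span_mode s f : s < 0 -> neg_span f -> neg_span (tmode s f).

Lemma neg_span_eq f g : neg_span f -> f =1 g -> neg_span g.
Proof. by move=> Nf /functional_extensionality <-. Qed.

Lemma tvecE (u : E) n' n : tvec u n' n = (n == n')%:R *: u.
Proof. by rewrite /tvec; case: eqP; rewrite ?scale1r ?scale0r. Qed.

Lemma tmode_vec (p : nat) n' n :
  tmode p (tvec vacuum n') n
  = (if p == 0%N then h else 0) *: tvec vacuum n' n + acoef p n' *: tvec vacuum (n' + p) n.
Proof.
have vac : mode_op p vacuum = (if p == 0%N then h else 0) *: vacuum by rewrite mode_op_pbw.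
rewrite /tmode !tvecE mode_opZ vac (_ : (n - p%:Z == n') = (n == n' + p%:Z)); last first.
  by apply/idP/idP => /eqP nn'; apply/eqP; lia.
case: (eqVneq n (n' + p)) => [->|_] /=; rewrite ?addrK;
  by apply/malgP => m; mcoeff_simp; ring_coords.
Qed.

Lemma neg_span_closed f :
  neg_span f -> (forall s, neg_span (tmode s f)) /\ neg_span (fun n => normp (f n)).
Proof.
elim=> {f} [n' kn'| |a f g _ [IHf Nf] _ [IHg Ng]|t f t_lt0 _ [IH Nf]]; split.
- case=> [p|j]; last by apply: neg_span_mode => //; apply: neg_span_vec.
  apply: (neg_span_eq _ (fun n => esym (tmode_vec p n' n))).
  apply: neg_spanZD; first exact: neg_span_vec.
  have kn'p : k < n' + p by lia.
  by apply: (neg_span_eq (neg_spanZD _ (neg_span_vec kn'p) neg_span0)) => n; rewrite addr0.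
- apply: (neg_span_eq (neg_span_vec kn')) => n.
  by rewrite /tvec; case: eqP; rewrite ?normp_pbw ?normp0.
- by move=> s; apply: (neg_span_eq neg_span0) => n; rewrite /tmode mode_op0 scaler0 addr0.
- by apply: (neg_span_eq neg_span0) => n; rewrite normp0.
- move=> s; apply: (neg_span_eq (neg_spanZD a (IHf s) (IHg s))) => n.
  by rewrite /tmode mode_opD mode_opZ; apply/malgP => k'; mcoeff_simp; ring_coords.
- by apply: (neg_span_eq (neg_spanZD a Nf Ng)) => n; rewrite linearP.
- move=> s; apply: (neg_span_eq (neg_spanZD 1 (neg_span_mode t_lt0 (IH s))
    (neg_spanZD (str s t) (IH (s + t)) (neg_spanZD (ctr s t) Nf neg_span0)))) => n.
  have /eqP := tmode_comm s t f n; rewrite subr_eq => /eqP ->.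
  by rewrite scale1r addr0 addrC.
- apply: (neg_span_eq (neg_span_mode t_lt0 Nf)) => n.
  by rewrite /tmode linearD linearZ /= normp_mode_op mode_op_normp.
Qed.

Lemma neg_span_fsupp f : neg_span f -> fsupp f.
Proof.
elim=> {f} [n _| |a f g _ [Lf fL] _ [Lg gL]|s f _ _ fsf].
- by exists [:: n] => n'; rewrite inE /tvec => /negbTE ->.
- by exists [::].
- exists (Lf ++ Lg) => n; rewrite mem_cat negb_or => /andP[nf ng].
  by rewrite fL // gL // scaler0 addr0.
- exact: fsupp_shift (mode_op0 _ _ _ _) fsf.
Qed.

(* [Phi n] is the form phi_n of the proof sketch: it sends x_(-y_1) ... x_(-y_r) 1 to the
   coefficient of v_(k/2) in (- x_(-y_r)) ... (- x_(-y_1)) v_(n/2). *)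
Fixpoint lweight m : K :=
  if m is y1 :: r then - acoef (- y1%:Z) (k + (sumn r)%:Z + y1%:Z) * lweight r else 1.

Definition phi (n : int) m : K := if k + (sumn m)%:Z == n then lweight m else 0.

Definition Phi (n : int) (X : E) : K^o := lext (fun m => phi n (to_part m) : K^o) X.

Lemma PhiD n : {morph Phi n : X Y / X + Y}. Proof. by move=> X Y; rewrite /Phi linearD. Qed.
Lemma PhiZ n a X : Phi n (a *: X) = a * Phi n X. Proof. by rewrite /Phi linearZ. Qed.
Lemma Phi0 n : Phi n 0 = 0. Proof. by rewrite /Phi linear0. Qed.

Lemma phi_cons n y1 m : phi n (y1 :: m) = - acoef (- y1%:Z) n * phi (n - y1%:Z) m.
Proof.
rewrite /phi /= (_ : (k + (y1 + sumn m)%N%:Z == n) = (k + (sumn m)%:Z == n - y1%:Z)).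
  by case: eqP => [->|]; rewrite ?mulr0 ?subrK.
by apply/idP/idP => /eqP kn; apply/eqP; lia.
Qed.

Lemma Phi_pbw n m : part m -> Phi n (pbw m) = phi n m.
Proof. by move=> pm; rewrite /Phi lextU to_partE. Qed.

Lemma Phi_prepend n y1 X : supported (fun m => part (y1 :: m)) X ->
  Phi n (prepend y1 X) = - acoef (- y1%:Z) n * Phi (n - y1%:Z) X.
Proof.
move=> sX; rewrite /Phi /prepend lext_comp -lextM; apply: eq_lext => m /sX pm.
by rewrite lextU !to_partE ?phi_cons //; apply: part_behead pm.
Qed.

Lemma Phi_neg_pbw m y n : part m -> (0 < y)%N ->
  Phi n (neg_pbw y m) = - acoef (- y%:Z) n * phi (n - y%:Z) m.
Proof.
elim: m y n => [|y1 r IH] y n pm y0.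
  by rewrite neg_pbw_le // Phi_pbw ?phi_cons // part_cons y0.
have pr := part_behead pm.
case: (leqP y y1) => yy1.
  have lby : lb y (y1 :: r) by rewrite /= yy1 (lbW yy1 (part_lb pm)).
  by rewrite neg_pbw_le // Phi_pbw ?phi_cons // part_cons y0 lby pm.
rewrite neg_pbw_gt // PhiD PhiZ (Phi_prepend _ (neg_pbw_prepend_part pm (ltnW yy1))) !IH //;
  last by rewrite addn_gt0 y0.
rewrite phi_cons.
have := acoef_bracket alpha beta gamma (- y1%:Z) (- y%:Z) n.
rewrite (str_antisym (- y1%:Z)) => A.
have -> : n - y1%:Z - y%:Z = n - y%:Z - y1%:Z by ring.
have -> : n - (y + y1)%N%:Z = n - y%:Z - y1%:Z by rewrite PoszD; ring.
have -> : - (y + y1)%N%:Z = - y1%:Z + - y%:Z by rewrite PoszD; ring.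
by apply: (eq_mod_rel (u := - phi (n - y%:Z - y1%:Z) r) A); ring.
Qed.

Lemma Phi_neg_op n y X : (0 < y)%N ->
  Phi n (neg_op y X) = - acoef (- y%:Z) n * Phi (n - y%:Z) X.
Proof.
move=> y0; rewrite /Phi /neg_op lext_comp -lextM; apply: eq_lext => m _.
exact: Phi_neg_pbw (part_to_part m) y0.
Qed.

Definition vanishes f := forall L, uniq L -> (forall n, n \notin L -> f n = 0) ->
  \sum_(n <- L) Phi n (f n) = 0.

Lemma tmode_neg_vanishes s f : s < 0 -> fsupp f -> vanishes (tmode s f).
Proof.
case: s => // j _ [Lf fL] L uL tL; set s := Negz j.
pose g n := acoef s n * Phi (n + s) (f n).
have Phi_tmode n : Phi n (tmode s f n) = g (n - s) - g n.
  rewrite /tmode PhiD PhiZ mode_op_negz Phi_neg_op // /g subrK /s NegzE.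
  by rewrite addrC mulNr.
have gLf n : n \notin Lf -> g n = 0 by move=> nLf; rewrite /g fL // Phi0 mulr0.
set L2 := undup (L ++ Lf ++ [seq n + s | n <- Lf]).
have uL2 : uniq L2 := undup_uniq _.
have zL n : n \notin L -> Phi n (tmode s f n) = 0 by move/tL ->; rewrite Phi0.
have zL2 n : n \notin L2 -> Phi n (tmode s f n) = 0.
  rewrite !mem_undup !mem_cat !negb_or => /and3P[_ nLf nsLf].
  rewrite Phi_tmode (gLf n nLf) (gLf (n - s)) ?subr0 //; apply: contra nsLf => nsLf.
  by apply/mapP; exists (n - s); rewrite ?subrK.
rewrite (sum_indep uL uL2 zL zL2); under eq_bigr do rewrite Phi_tmode.
rewrite sumrB (sum_shift uL2 gLf) ?subrr // => n nLf;
  by rewrite mem_undup !mem_cat nLf ?orbT.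
Qed.

Lemma neg_span_vanishes f : neg_span f -> vanishes f.
Proof.
elim=> {f} [n' kn' L _ _| L _ _|a f g Nf vf Ng vg L uL fgL|s f s_lt0 Nf _].
- rewrite big1 // => n _; rewrite /tvec; case: eqP => [->|_]; last exact: Phi0.
  by rewrite Phi_pbw // /phi /= addr0; case: eqP => // kn'0; lia.
- by rewrite big1 // => n _; apply: Phi0.
- have [Lf fL] := neg_span_fsupp Nf; have [Lg gL] := neg_span_fsupp Ng.
  set L3 := undup (L ++ Lf ++ Lg).
  have zL n : n \notin L -> Phi n (a *: f n + g n) = 0 by move/fgL ->; rewrite Phi0.
  have zL3 n : n \notin L3 -> Phi n (a *: f n + g n) = 0.
    rewrite mem_undup !mem_cat !negb_or => /and3P[_ nf ng].
    by rewrite fL // gL // scaler0 addr0 Phi0.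
  rewrite (sum_indep uL (undup_uniq _) zL zL3); under eq_bigr do rewrite PhiD PhiZ.
  rewrite big_split /= -mulr_sumr vf ?vg ?undup_uniq ?mulr0 ?addr0 // => n;
    rewrite mem_undup !mem_cat !negb_or => /and3P[_ nf ng]; by [apply: gL | apply: fL].
- exact: tmode_neg_vanishes s_lt0 (neg_span_fsupp Nf).
Qed.

Lemma vec_notin_neg_span : ~ neg_span (tvec vacuum k).
Proof.
move=> /neg_span_vanishes /(_ [:: k] isT).
have outside n : n \notin [:: k] -> tvec vacuum k n = 0.
  by rewrite inE /tvec => /negbTE ->.
move=> /(_ outside); rewrite big_seq1 /tvec eqxx Phi_pbw // /phi /= addr0 eqxx.
by move/eqP; rewrite oner_eq0.
Qed.

End TensorArgument.

Arguments neg_span_vec {K c h l alpha beta gamma k n}.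
Arguments neg_span0 {K c h l alpha beta gamma k}.

Lemma neg_span_pullback (K : numFieldType) (c h l alpha beta gamma : K) (k : int)
    (M : lmodType K) (rho : Drep M) (F : M -> {malg K[seq nat]}) :
  is_Dmodule rho -> is_Dhom rho (verma_rep c h l) F ->
  tsubmod alpha beta gamma rho
    (fun f => fsupp f /\ neg_span c h l alpha beta gamma k (fun n => F (f n))).
Proof.
case=> dlin hlin clin llin _ [Flin Fd Fh Fc Fl]; have F0 := is_lin0 Flin.
split; split.
- by move=> f [].
- split; first by exists [::].
  by apply: (neg_span_eq neg_span0) => n; rewrite F0.
- move=> a f g [[Lf fL] Nf] [[Lg gL] Ng]; split.
    exists (Lf ++ Lg) => n; rewrite mem_cat negb_or => /andP[nf ng].
    by rewrite fL // gL // scaler0 addr0.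
  by apply: (neg_span_eq (neg_spanZD a Nf Ng)) => n; rewrite Flin.
- move=> m f [fsf Nf]; split; first exact: fsupp_shift (is_lin0 (dlin m)) fsf.
  apply: (neg_span_eq ((neg_span_closed Nf).1 (2 * m))) => n.
  by rewrite -tD_tmode /tD (is_linD Flin) (is_linZ Flin) Fd.
- move=> j f [fsf Nf]; split; first exact: fsupp_shift (is_lin0 (hlin j)) fsf.
  apply: (neg_span_eq ((neg_span_closed Nf).1 (2 * j + 1))) => n.
  by rewrite -tH_tmode /tH (is_linD Flin) (is_linZ Flin) Fh.
- move=> f [[L fL] Nf]; have [_ Nnf] := neg_span_closed Nf; split; split.
  + by exists L => n nL; rewrite /tC fL // (is_lin0 clin).
  + by apply: (neg_span_eq (neg_spanZD c Nnf neg_span0)) => n; rewrite /tC Fc addr0.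
  + by exists L => n nL; rewrite /tL fL // (is_lin0 llin).
  + by apply: (neg_span_eq (neg_spanZD l Nnf neg_span0)) => n; rewrite /tL Fl addr0.
Qed.

Lemma exists_separating_submodule (K : numFieldType) (c h l alpha beta gamma : K) (k : int)
    (M : lmodType K) (rho : Drep M) (one : M) :
  is_Verma c h l rho one ->
  exists S, [/\ tsubmod alpha beta gamma rho S, S (tvec one (k + 1)) & ~ S (tvec one k)].
Proof.
case=> Dm _ univ; have [F [[Fhom F1] _]] :=
  univ _ _ _ (verma_is_Dmodule c h l) (verma_hw c h l).
have F0 : F 0 = 0 by case: Fhom => Flin _ _ _ _; apply: is_lin0.
have F_vec n : (fun n' => F (tvec one n n')) =1 tvec (pbw K [::]) n.
  by move=> n'; rewrite /tvec; case: eqP; rewrite ?F1 ?F0.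
eexists; split; first exact: (@neg_span_pullback _ c h l alpha beta gamma k _ _ _ Dm Fhom).
- split; first by exists [:: k + 1] => n; rewrite inE /tvec => /negbTE ->.
  have k_lt : k < k + 1 by lia.
  by apply: (neg_span_eq (neg_span_vec k_lt)) => n; rewrite F_vec.
- by move=> [_ Nk]; apply: vec_notin_neg_span (neg_span_eq Nk (F_vec k)).
Qed.

Theorem lemma3p4 (R : realType) (c h alpha beta l gamma : R[i])
  (M : lmodType R[i]) (rho : Drep M) (one : M) :
  l != 0 -> gamma != 0 -> is_Verma c h l rho one ->
  (forall k : int,
     ~ in_gen alpha beta gamma rho (tvec one (k + 1)) (tvec one k)) /\
  ~ t_irreducible alpha beta gamma rho.
Proof.
move=> _ _ verma; split.
  move=> k gen; have [S [subS S1 S0]] := exists_separating_submodule alpha beta gamma k verma.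
  exact: S0 (gen S subS S1).
move=> [_ irr]; have [S [subS S1 S0]] := exists_separating_submodule alpha beta gamma 0 verma.
case: (irr S subS) => [S_zero | S_all].
  have one0 : one = 0 by have := S_zero _ S1 1; rewrite /tvec add0r eqxx.
  apply: S0; have -> : tvec one 0 = (fun _ => 0).
    by apply: functional_extensionality => n; rewrite /tvec one0; case: ifP.
  by case: subS => [[_ S0' _] _].
by apply/S0/S_all; exists [:: 0] => n; rewrite inE /tvec => /negbTE ->.
Qed.
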